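(* The dominating cooperative game mapping $\omega$ is weakly chain-rule decomposable and importance inducing.
   Context: $X$ is a fixed finite set of $n=|X|$ variables. An assignment over $U\subseteq X$ is a map $\mathbf u:U\to\{0,1\}$; $\mathbf u;\mathbf v$ is concatenation of assignments with disjoint domains, $\mathbf u_S$ is restriction. For $S\subseteq X$ and $\mathbf u$ over $X$, $\mathbf u^{\oplus S}$ flips the values of the variables in $S$. $\mathbb B(X)$ is the set of Boolean functions $\{0,1\}^X\to\{0,1\}$, combined pointwise by $\lor,\land$ (juxtaposition), $\oplus$, negation $\overline f$; a variable $x$ also denotes $\mathbf u\mapsto\mathbf u(x)$; $f\ge g$ is pointwise. Cofactor: $f_{\mathbf v}(\mathbf u)=f(\mathbf v;\mathbf u_{X\setminus V})$ for $\mathbf v$ over $V$; $f_{x/c}$ for $V=\{x\}$. $\mathrm{dep}(f)=\{x: f_{x/1}\ne f_{x/0}\}$; $f$ is monotone in $x$ if $f_{x/1}\ge f_{x/0}$. $f^{\oplus y}(\mathbf u)=f(\mathbf u^{\oplus\{y\}})$. For a permutation $\sigma$ of $X$: $(\sigma\mathbf u)(x)=\mathbf u(\sigma^{-1}(x))$, $(\sigma f)(\mathbf u)=f(\sigma^{-1}\mathbf u)$. $f[x/s]=s f_{x/1}\lor\overline s f_{x/0}$. Modularity: $f$ is modular in $g$ if $g$ is not constant and there are $\ell\in\mathbb B(X)$, $z\in X$ with $\mathrm{dep}(\ell)\cap\mathrm{dep}(g)=\emptyset$ and $f=\ell[z/g]$; monotonically modular if moreover $\ell$ is monotone in $z$.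 Then $f_{g/1}:=\ell_{z/1}$, $f_{g/0}:=\ell_{z/0}$ (well defined), and for a variable $w$, $f[g/w]:=w f_{g/1}\lor\overline w f_{g/0}$. Cooperative games: $v:2^X\to\mathbb R$, combined and compared pointwise; $\partial_xv(S)=v(S\cup\{x\})-v(S\setminus\{x\})$. A cooperative game mapping (CGM) is $\tau:\mathbb B(X)\to(2^X\to\mathbb R)$, $f\mapsto\tau_f$. It is importance inducing if for all $x,y\in X$, permutations $\sigma$ and $f,g,h$: (Bound$_{CG}$) $0\le\partial_x\tau_f\le1$; (Dum$_{CG}$) $\partial_x\tau_f=0$ if $x\notin\mathrm{dep}(f)$; (Dic$_{CG}$) $\partial_x\tau_x=\partial_x\tau_{\overline x}=1$; (Type$_{CG}$) $\tau_f(S)=\tau_{\sigma f}(\sigma(S))$ and $\tau_f(S)=\tau_{f^{\oplus y}}(S)$ for all $S$; (ModEC$_{CG}$) $\partial_x\tau_f\ge\partial_x\tau_h$ whenever $f,h$ are monotonically modular in $g$, $f_{g/1}\ge h_{g/1}$, $h_{g/0}\ge f_{g/0}$, $x\in\mathrm{dep}(g)$. $\tau$ is weakly chain-rule decomposable if for all $f$ monotonically modular in $g$ and $x\in\mathrm{dep}(g)$: $\partial_x\tau_f=(\partial_x\tau_g)(\partial_{x_g}\tau_{f[g/x_g]})$ for a variable $x_g\notin\mathrm{dep}(f)$. The dominating CGM is $\omega_f(S)=1$ if there is $\mathbf u\in\{0,1\}^S$ such that $f(\mathbf u;\mathbf w)=1$ for all $\mathbf w\in\{0,1\}^{X\setminus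 S}$, and $\omega_f(S)=0$ otherwise. *)

From HB Require Import structures.
From mathcomp Require Import all_boot all_order all_algebra all_fingroup.
Set Implicit Arguments. Unset Strict Implicit. Unset Printing Implicit Defensive.
Import Order.TTheory GRing.Theory Num.Theory.
Local Open Scope ring_scope.

Section Defs.
Variable X : finType.

(* Full assignments over X; assignments over a subset U are represented by
   full assignments of which only the values on U matter. *)
Definition assign := {ffun X -> bool}.

Definition boolfun := assign -> bool.

Definition concat (V : {set X}) (v u : assign) : assign :=
  [ffun x => if x \in V then v x else u x].

Definition upd (u : assign) (x : X) (c : bool) : assign :=
  [ffun y => if y == x then c else u y].

Definition cof (f : boolfun) (x : X) (c : bool) : boolfun :=
  fun u => f (upd u x c).

Definition dep (f : boolfun) (x : X) : Prop := cof f x true <> cof f x false.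

Definition fle (g f : boolfun) : Prop := forall u, g u -> f u.

Definition monotone_in (f : boolfun) (x : X) : Prop :=
  fle (cof f x false) (cof f x true).

Definition varf (x : X) : boolfun := fun u => u x.
Definition negf (f : boolfun) : boolfun := fun u => ~~ f u.

Definition flip (y : X) (u : assign) : assign :=
  [ffun x => if x == y then ~~ u x else u x].
Definition flipf (f : boolfun) (y : X) : boolfun := fun u => f (flip y u).

Definition permA (s : {perm X}) (u : assign) : assign :=
  [ffun x => u ((s^-1)%g x)].
Definition permF (s : {perm X}) (f : boolfun) : boolfun :=
  fun u => f (permA (s^-1)%g u).

Definition subst (f : boolfun) (x : X) (s : boolfun) : boolfun :=
  fun u => (s u && cof f x true u) || (~~ s u && cof f x false u).

Definition nonconstant (g : boolfun) : Prop := exists u v, g u <> g v.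

(* (l, z) witnesses that f is modular in g: f = l[z/g] *)
Definition modular_wit (f g l : boolfun) (z : X) : Prop :=
  nonconstant g /\ (forall x, ~ (dep l x /\ dep g x)) /\ f = subst l z g.

Definition mmodular_wit (f g l : boolfun) (z : X) : Prop :=
  modular_wit f g l z /\ monotone_in l z.

Definition monotonically_modular (f g : boolfun) : Prop :=
  exists l z, mmodular_wit f g l z.

(* f[g/w] := w f_{g/1} \/ ~w f_{g/0}, with f_{g/c} := l_{z/c} for a witness (l,z) *)
Definition gsubst (l : boolfun) (z : X) (w : X) : boolfun :=
  fun u => (u w && cof l z true u) || (~~ u w && cof l z false u).

Variable R : realFieldType.

Definition game := {set X} -> R.
Definition cgm := boolfun -> game.

Definition pder (x : X) (v : game) : game :=
  fun S => v (x |: S) - v (S :\ x).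

Definition Bound_CG (tau : cgm) : Prop :=
  forall f x S, 0 <= pder x (tau f) S <= 1.
Definition Dum_CG (tau : cgm) : Prop :=
  forall f x, ~ dep f x -> forall S, pder x (tau f) S = 0.
Definition Dic_CG (tau : cgm) : Prop :=
  forall x S, pder x (tau (varf x)) S = 1 /\ pder x (tau (negf (varf x))) S = 1.
Definition Type_CG (tau : cgm) : Prop :=
  (forall (s : {perm X}) f S, tau f S = tau (permF s f) (s @: S)) /\
  (forall y f S, tau f S = tau (flipf f y) S).
Definition ModEC_CG (tau : cgm) : Prop :=
  forall (f h g l1 l2 : boolfun) (z1 z2 x : X),
    mmodular_wit f g l1 z1 -> mmodular_wit h g l2 z2 ->
    fle (cof l2 z2 true) (cof l1 z1 true) ->
    fle (cof l1 z1 false) (cof l2 z2 false) ->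
    dep g x ->
    forall S, pder x (tau h) S <= pder x (tau f) S.

Definition importance_inducing (tau : cgm) : Prop :=
  [/\ Bound_CG tau, Dum_CG tau, Dic_CG tau, Type_CG tau & ModEC_CG tau].

Definition weakly_chain_rule_decomposable (tau : cgm) : Prop :=
  forall (f g l : boolfun) (z x xg : X),
    mmodular_wit f g l z -> dep g x -> ~ dep f xg ->
    forall S, pder x (tau f) S = pder x (tau g) S * pder xg (tau (gsubst l z xg)) S.

Definition omega : cgm := fun f S =>
  if [exists u : assign, [forall w : assign, f (concat S u w)]] then 1 else 0.

End Defs.

From mathcomp Require Import all_boot all_order all_algebra all_fingroup.
From Stdlib Require Import Classical FunctionalExtensionality.
Set Implicit Arguments. Unset Strict Implicit. Unset Printing Implicit Defensive.
Import Order.TTheory GRing.Theory Num.Theory.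

(* The dominating game is the indicator of "S forces f": some partial
   assignment of S makes f true whatever the other variables are.  Every
   axiom is a property of this forcing relation.
   - Forcing is monotone in S and in f, and is blind to variables f does not
     depend on; this gives Bound, Dum, and (via transport along bijections of
     assignments commuting with concatenation) Type.  Hence for x outside
     the variables of a and b, the marginal contribution of x to omega_f is
     the one to omega_g times the gate [S forces a but not b].
   - A monotone modular f = l[z/g] is such an if-then-else with branches
     l_{z/1} >= l_{z/0}, and so is f[g/x_g] with guard the variable x_g;
     this yields ModEC (the gate is monotone in the branches) and the weak
     chain rule (both sides equal gate * d_x omega_g). *)

Section Forcing.
Variable X : finType.
Implicit Types (f g a b : boolfun X) (S T G : {set X}) (u v w : assign X).

Definition forces S f : bool :=
  [exists u : assign X, [forall w : assign X, f (concat S u w)]].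

Definition local_on f (A : {set X}) : Prop :=
  forall u v, (forall x, x \in A -> u x = v x) -> f u = f v.

Definition indep f (x : X) : Prop :=
  forall u, f (upd u x true) = f (upd u x false).

Lemma indep_of_nondep f x : ~ dep f x -> indep f x.
Proof.
move=> ndep u; have E : cof f x true = cof f x false by apply: NNPP.
exact: (congr1 (fun h => h u) E).
Qed.

Lemma upd_id u x : upd u x (u x) = u.
Proof. by apply/ffunP => y; rewrite ffunE; case: eqP => // ->. Qed.

Lemma indep_upd f x : indep f x -> forall u c, f (upd u x c) = f u.
Proof. by move=> fx u c; rewrite -{2}(upd_id u x); case: c; case: (u x); rewrite ?fx. Qed.

Lemma local_of_indep f (A : {set X}) :
  (forall x, x \notin A -> indep f x) -> local_on f A.
Proof.
move=> fA u v uvA.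
have off_seq : forall (s : seq X) u', (forall x, x \in s -> x \notin A) ->
    (forall x, x \notin s -> u' x = v x) -> f u' = f v.
  elim=> [|y s IH] u' s_out eq_out.
    by congr f; apply/ffunP => x; apply: eq_out.
  rewrite -(indep_upd (fA y (s_out y (mem_head _ _))) u' (v y)).
  apply: IH => [x xs|x xs]; first by apply: s_out; rewrite inE xs orbT.
  rewrite ffunE; case: eqP => [-> //|/eqP nxy].
  by apply: eq_out; rewrite inE negb_or nxy.
apply: (off_seq (enum (~: A))) => x; rewrite mem_enum inE ?negbK //.
exact: uvA.
Qed.

Definition depset f : {set X} :=
  [set x | [exists u, f (upd u x true) != f (upd u x false)]].

Lemma depsetP f x : reflect (dep f x) (x \in depset f).
Proof.
rewrite inE; apply: (iffP existsP) => [[u /eqP fu] E|fx].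
  by apply: fu; exact: (congr1 (fun h => h u) E).
apply: NNPP => nd; apply: fx; apply: functional_extensionality => u.
by apply/eqP/negPn/negP => neq; apply: nd; exists u.
Qed.

Lemma local_depset f : local_on f (depset f).
Proof. by apply: local_of_indep => x /depsetP; apply: indep_of_nondep. Qed.

Lemma cof_indep f z c x : indep f x -> indep (cof f z c) x.
Proof.
have upd_upd : forall u y (c1 c2 : bool), upd (upd u y c1) y c2 = upd u y c2.
  by move=> u y c1 c2; apply/ffunP => t; rewrite !ffunE; case: (t =P y).
have upd_C : forall u y y' (c1 c2 : bool),
    y != y' -> upd (upd u y c1) y' c2 = upd (upd u y' c2) y c1.
  move=> u y y' c1 c2 nyy'; apply/ffunP => t; rewrite !ffunE.
  case: (eqVneq t y) => [->|_]; last by case: (t == y').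
  by rewrite (negbTE nyy').
move=> fx u; rewrite /cof; case: (eqVneq x z) => [->|nxz]; first by rewrite !upd_upd.
by rewrite !(upd_C _ _ _ _ _ nxz) fx.
Qed.

Lemma forces_subset S T f : S \subset T -> forces S f -> forces T f.
Proof.
move=> ST /existsP [u /forallP uf]; apply/existsP; exists u; apply/forallP => w.
have := uf (concat T u w); congr f; apply/ffunP => x; rewrite !ffunE.
by case: ifP => // xS; rewrite (subsetP ST x xS).
Qed.

Lemma forces_impl S f g : (forall u, f u -> g u) -> forces S f -> forces S g.
Proof.
by move=> fg /existsP [u /forallP uf]; apply/existsP; exists u; apply/forallP => w; apply: fg.
Qed.

Lemma forces_setD1 S f x : indep f x -> forces (S :\ x) f = forces S f.
Proof.
move=> fx; apply/idP/idP; first by apply: forces_subset; apply: subD1set.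
move=> /existsP [u /forallP uf]; apply/existsP; exists u; apply/forallP => w.
rewrite -(indep_upd fx (concat (S :\ x) u w) (concat S u w x)).
suff -> : upd (concat (S :\ x) u w) x (concat S u w x) = concat S u w by [].
by apply/ffunP => y; rewrite !ffunE !inE; case: (y =P x) => [->|] //=; rewrite ffunE.
Qed.

Lemma forces_setU1 S f x : indep f x -> forces (x |: S) f = forces S f.
Proof.
move=> fx; rewrite -(forces_setD1 _ fx) -[RHS](forces_setD1 _ fx).
rewrite (_ : (x |: S) :\ x = S :\ x) //.
by apply/setP => y; rewrite !inE; case: (y =P x).
Qed.

Lemma forces_literal S x c : forces S (fun u => u x == c) = (x \in S).
Proof.
apply/existsP/idP => [[u /forallP /(_ [ffun=> ~~ c])]|xS].
  by rewrite !ffunE; case: (x \in S) => //; case: c.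
by exists [ffun=> c]; apply/forallP => w; rewrite !ffunE xS.
Qed.

Lemma forces_var S x : forces S (varf x) = (x \in S).
Proof.
rewrite -(forces_literal S x true); congr forces.
by apply: functional_extensionality => u; rewrite /varf eqb_id.
Qed.

Lemma forces_negvar S x : forces S (negf (varf x)) = (x \in S).
Proof.
rewrite -(forces_literal S x false); congr forces.
by apply: functional_extensionality => u; rewrite /negf /varf eqbF_neg.
Qed.

Lemma forces_transport (phi psi : assign X -> assign X) S T f :
  cancel phi psi -> cancel psi phi ->
  (forall u w, phi (concat S u w) = concat T (phi u) (phi w)) ->
  forces S f = forces T (fun u => f (psi u)).
Proof.
move=> phiK psiK phi_concat; apply/existsP/existsP => [[u /forallP uf]|[u /forallP uf]].
  by exists (phi u); apply/forallP => w; rewrite -[w]psiK -phi_concat phiK.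
exists (psi u); apply/forallP => w; have := uf (phi w).
by rewrite -{1}[u]psiK -phi_concat phiK.
Qed.

Lemma forces_perm (s : {perm X}) S f : forces S f = forces (s @: S) (permF s f).
Proof.
apply: (@forces_transport (permA s)) => [u|u|u w]; apply/ffunP => x;
  rewrite !ffunE ?invgK ?permK ?permKV //.
have xS : (x \in s @: S) = ((s^-1)%g x \in S).
  by rewrite -[in LHS](permKV s x) mem_imset //; exact: perm_inj.
by rewrite xS.
Qed.

Lemma forces_flip y S f : forces S f = forces S (flipf f y).
Proof.
by apply: (@forces_transport (flip y)) => [u|u|u w]; apply/ffunP => x; rewrite !ffunE;
  case: (x =P y); case: (x \in S); rewrite ?negbK.
Qed.

Definition ite g a b : boolfun X := fun u => g u && a u || ~~ g u && b u.

Lemma forces_ite G g a b S :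
  local_on g G -> local_on a (~: G) -> local_on b (~: G) -> (forall u, b u -> a u) ->
  forces S (ite g a b) = forces S b || forces S a && forces S g.
Proof.
move=> gG aG bG ba; apply/idP/idP.
- move=> /existsP [u /forallP uf].
  case: (boolP [forall w, g (concat S u w)]) => [/forallP ug|/forallPn [w0 gw0]].
    apply/orP; right; apply/andP; split; apply/existsP; exists u; apply/forallP => w.
      by have := uf w; rewrite /ite ug orbF.
    exact: ug.
  (* off G, any w can be combined with w0 to defeat the guard *)
  apply/orP; left; apply/existsP; exists u; apply/forallP => w.
  set w' := concat G w0 w.
  have g_off : g (concat S u w') = false.
    rewrite (gG _ (concat S u w0)); first exact: negbTE gw0.
    by move=> x xG; rewrite !ffunE; case: ifP => //; rewrite xG.
  have := uf w'; rewrite /ite g_off /= => bw'.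
  rewrite -(bG (concat S u w')) // => x; rewrite inE => xG.
  by rewrite !ffunE; case: ifP => // _; rewrite (negbTE xG).
- case/orP => [|/andP [/existsP [ua /forallP uaf] /existsP [ug /forallP ugf]]].
    by apply: forces_impl => u bu; rewrite /ite bu (ba _ bu); case: (g u).
  (* glue the guard witness on G with the branch witness off G *)
  apply/existsP; exists (concat G ug ua); apply/forallP => w; rewrite /ite.
  have -> : g (concat S (concat G ug ua) w) = g (concat S ug w).
    by apply: gG => y yG; rewrite !ffunE; case: ifP => //; rewrite yG.
  have -> : a (concat S (concat G ug ua) w) = a (concat S ua w).
    apply: aG => y; rewrite inE => yG.
    by rewrite !ffunE; case: ifP => // _; rewrite (negbTE yG).
  by rewrite ugf uaf.
Qed.

(* A modular f = l[z/g] is the if-then-else g ? l_{z/1} : l_{z/0}, whose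
   branches only read the complement of dep(g). *)
Lemma cof_local_modular f g l z c :
  modular_wit f g l z -> local_on (cof l z c) (~: depset g).
Proof.
case=> _ [disj _]; apply: local_of_indep => x; rewrite inE negbK => /depsetP gx.
by apply/cof_indep/indep_of_nondep => lx; apply: (disj x).
Qed.

Lemma nonconstant_onto g c : nonconstant g -> exists u, g u = c.
Proof.
case=> u1 [u2 g12]; case: (eqVneq (g u1) c) => [|g1c]; first by exists u1.
by exists u2; move: g12 g1c; case: (g u1); case: (g u2); case: c.
Qed.

Lemma cof_indep_modular f g l z c y :
  modular_wit f g l z -> ~ dep f y -> indep (cof l z c) y.
Proof.
move=> W ndep; have [nc [disj f_def]] := W.
case: (boolP (y \in depset g)) => [/depsetP gy|gy].
  by apply/cof_indep/indep_of_nondep => ly; apply: (disj y).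
have [v gv] := nonconstant_onto c nc.
(* place v on dep(g) so that the guard selects the branch c *)
move=> u; set u' := concat (depset g) v u.
have f_branch : forall d, f (upd u' y d) = cof l z c (upd u y d).
  move=> d; have g_c : g (upd u' y d) = c.
    rewrite -gv; apply: local_depset => x xg; rewrite !ffunE xg.
    by case: (x =P y) => // exy; rewrite -exy xg in gy.
  have l_same : forall e, cof l z e (upd u' y d) = cof l z e (upd u y d).
    move=> e; apply: (cof_local_modular e W) => x; rewrite inE => xg.
    by rewrite !ffunE (negbTE xg).
  by rewrite f_def /subst g_c !l_same; case: c {gv g_c}; rewrite ?orbF.
by rewrite -!f_branch (indep_of_nondep ndep).
Qed.

Variable R : realFieldType.
Local Open Scope ring_scope.

Lemma omegaE f S : omega R f S = if forces S f then 1 else 0.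
Proof. by []. Qed.

Lemma pder_omegaE f x S :
  pder x (omega R f) S =
  (if forces (x |: S) f then 1 else 0) - (if forces (S :\ x) f then 1 else 0).
Proof. by []. Qed.

Definition gate S a b : R := if ~~ forces S b && forces S a then 1 else 0.

Lemma pder_ite G g a b x S :
  local_on g G -> local_on a (~: G) -> local_on b (~: G) -> (forall u, b u -> a u) ->
  indep a x -> indep b x ->
  pder x (omega R (ite g a b)) S = gate S a b * pder x (omega R g) S.
Proof.
move=> gG aG bG ba ax bx; rewrite !pder_omegaE /gate.
rewrite !(forces_ite _ gG aG bG ba) !(forces_setU1 S ax, forces_setU1 S bx).
rewrite !(forces_setD1 S ax, forces_setD1 S bx).
by case: (forces S b); case: (forces S a); case: (forces _ g); case: (forces _ g);
  rewrite /= ?mul1r ?mul0r ?subrr ?subr0 ?sub0r.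
Qed.

Lemma pder_modular f g l z x S :
  mmodular_wit f g l z -> dep g x ->
  pder x (omega R f) S = gate S (cof l z true) (cof l z false) * pder x (omega R g) S.
Proof.
move=> [W mono] gx; have [_ [disj ->]] := W.
have lx : forall c, indep (cof l z c) x.
  by move=> c; apply/cof_indep/indep_of_nondep => lx_dep; apply: (disj x).
exact: (pder_ite S (@local_depset g) (cof_local_modular true W)
  (cof_local_modular false W) mono (lx true) (lx false)).
Qed.

Lemma pder_omega_bound f x S : 0 <= pder x (omega R f) S <= 1.
Proof.
have sub : S :\ x \subset x |: S.
  by apply/subsetP => y; rewrite !inE => /andP [_ ->]; rewrite orbT.
have mono : forces (S :\ x) f ==> forces (x |: S) f.
  by apply/implyP; apply: forces_subset.
rewrite pder_omegaE; move: mono.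
by case: (forces (x |: S) f); case: (forces (S :\ x) f); rewrite //= ?subrr ?subr0 ?lexx ?ler01.
Qed.

(* A literal is forced exactly by coalitions containing its variable. *)
Lemma pder_omega_var x S : pder x (omega R (varf x)) S = 1.
Proof. by rewrite pder_omegaE !forces_var setU11 setD11 subr0. Qed.

Lemma pder_omega_negvar x S : pder x (omega R (negf (varf x))) S = 1.
Proof. by rewrite pder_omegaE !forces_negvar setU11 setD11 subr0. Qed.

(* f[g/x_g] is the if-then-else x_g ? l_{z/1} : l_{z/0}, so its marginal in
   x_g is the gate itself. *)
Lemma pder_gsubst f g l z xg S :
  mmodular_wit f g l z -> ~ dep f xg ->
  pder xg (omega R (gsubst l z xg)) S = gate S (cof l z true) (cof l z false).
Proof.
move=> [W mono] fxg.
have lxg : forall c, indep (cof l z c) xg by move=> c; apply: (cof_indep_modular c W fxg).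
have l_off : forall c, local_on (cof l z c) (~: [set xg]).
  by move=> c; apply: local_of_indep => y; rewrite !inE negbK => /eqP ->.
have var_local : local_on (varf xg) [set xg] by move=> u v uv; apply: uv; rewrite inE.
rewrite (pder_ite S var_local (l_off true) (l_off false) mono (lxg true) (lxg false)).
by rewrite (pder_omega_var xg S) mulr1.
Qed.

Lemma gate_mono S a1 b1 a2 b2 :
  (forall u, a2 u -> a1 u) -> (forall u, b1 u -> b2 u) -> gate S a2 b2 <= gate S a1 b1.
Proof.
move=> a21 b12.
have fa : forces S a2 ==> forces S a1 by apply/implyP; apply: forces_impl.
have fb : forces S b1 ==> forces S b2 by apply/implyP; apply: forces_impl.
rewrite /gate; move: fa fb.
by case: (forces S a1); case: (forces S a2); case: (forces S b1); case: (forces S b2);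
  rewrite //= ?ler01 ?lexx.
Qed.

End Forcing.

Theorem mainTheorem12 (R : realFieldType) (X : finType) :
  weakly_chain_rule_decomposable (@omega X R) /\ importance_inducing (@omega X R).
Proof.
split.
  move=> f g l z x xg W gx fxg S.
  by rewrite (pder_modular R S W gx) (pder_gsubst R S W fxg) mulrC.
split.
- by move=> f x S; apply: pder_omega_bound.
- move=> f x ndep S; have fx := indep_of_nondep ndep.
  by rewrite pder_omegaE (forces_setU1 S fx) (forces_setD1 S fx) subrr.
- by move=> x S; rewrite pder_omega_var pder_omega_negvar.
- by split=> [s f S|y f S]; rewrite !omegaE -?forces_perm -?forces_flip.
- move=> f h g l1 l2 z1 z2 x W1 W2 le1 le0 gx S.
  rewrite (pder_modular R S W1 gx) (pder_modular R S W2 gx).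
  have /andP [d0 _] := pder_omega_bound R g x S.
  by apply: ler_wpM2r => //; apply: gate_mono.
Qed.
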